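(* Let $n\ge1$. (a) If $\alpha$ is an honourable subset of $\coprod_{k=0}^n\mathrm{Sur}([n],[k])$, then $\sum_{k=0}^n k|\alpha_k|\ge n$. (b) Conversely, let $(a_0,\dots,a_n)\in\mathbb{N}_0^{n+1}$ with $a_k\le\binom nk$ for all $k$. If $\sum_{k=0}^n k a_k\ge n$, then there is an honourable subset $\alpha$ of $\coprod_{k=0}^n\mathrm{Sur}([n],[k])$ with $|\alpha_k|=a_k$ for every $k\in\{0,\dots,n\}$.
   Context: $[n]=\{0<\dots<n\}$; $\mathrm{Sur}([n],[k])$ is the set of surjective order-preserving maps $[n]\to[k]$. For $\mu\in\mathrm{Sur}([n],[k])$ let $\mu^\triangle:=\{\max\mu^{-1}(0),\dots,\max\mu^{-1}(k-1)\}\subseteq\{0,\dots,n-1\}$ (a set of cardinality $k$; $\mu\mapsto\mu^\triangle$ is a bijection from $\coprod_{k}\mathrm{Sur}([n],[k])$ onto the power set of $\{0,\dots,n-1\}$). A subset $\alpha\subseteq\coprod_{k=0}^n\mathrm{Sur}([n],[k])$ is honourable if $\bigcup_{\mu\in\alpha}\mu^\triangle=\{0,1,\dots,n-1\}$; $\alpha_k:=\alpha\cap\mathrm{Sur}([n],[k])$. *)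

From mathcomp Require Import all_boot.
Set Implicit Arguments. Unset Strict Implicit. Unset Printing Implicit Defensive.

(* [n] = {0,...,n} is encoded as 'I_n.+1.
   Sur n k = set of surjective order-preserving maps [n] -> [k]. *)
Definition Sur (n k : nat) : {set {ffun 'I_n.+1 -> 'I_k.+1}} :=
  [set f : {ffun 'I_n.+1 -> 'I_k.+1} | [forall i : 'I_n.+1, forall j : 'I_n.+1, (i <= j) ==> (f i <= f j)]
           && [forall y : 'I_k.+1, exists x : 'I_n.+1, f x == y]].

Definition tri (n k : nat) (mu : {ffun 'I_n.+1 -> 'I_k.+1}) : {set 'I_n.+1} :=
  [set i : 'I_n.+1 | [exists j : 'I_k.+1,
     [&& (j < k)%N, mu i == j &
         [forall i' : 'I_n.+1, (mu i' == j) ==> (i' <= i)]]]].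

(* A subset alpha of the disjoint union coprod_{k=0}^n Sur([n],[k]) is
   encoded as the family of its components alpha_k, k : 'I_n.+1. *)
Definition in_coprod (n : nat) (alpha : forall k : 'I_n.+1, {set {ffun 'I_n.+1 -> 'I_k.+1}}) :=
  forall k : 'I_n.+1, alpha k \subset Sur n k.

Definition honourable (n : nat) (alpha : forall k : 'I_n.+1, {set {ffun 'I_n.+1 -> 'I_k.+1}}) :=
  \bigcup_(k < n.+1) \bigcup_(mu in alpha k) tri mu = [set i : 'I_n.+1 | (i < n)%N].

From mathcomp Require Import all_boot.
Set Implicit Arguments. Unset Strict Implicit. Unset Printing Implicit Defensive.

(* (a) A surjection mu : [n] -> [k] is injective on mu^triangle, whose image
   lies in {0, ..., k-1}; hence |mu^triangle| <= k.  An honourable family must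
   cover the n positions {0, ..., n-1}, so the union bound gives
   n <= sum_k k |alpha_k|.

   (b) Every k-subset S of {0, ..., n-1} is mu^triangle for the surjection
   rank_map S k : i |-> #{s in S | s < i}, and distinct S give distinct maps.
   It therefore suffices to choose, for each k, a_k distinct k-subsets of
   {0, ..., n-1} that together cover all n positions.  This is done greedily:
   a new k-subset can always be taken nested with (inside, or containing) the
   set R of still uncovered points, so it covers min(k, |R|) new points and,
   when R is nonempty and k > 0, differs from all subsets chosen before.  The
   weight condition sum_k k a_k >= n then forces full coverage. *)

Definition lower (m : nat) : {set 'I_m.+1} := [set i : 'I_m.+1 | (i < m)%N].

Lemma card_lower m : #|lower m| = m.
Proof.
have -> : lower m = [set~ ord_max].
  apply/setP=> j; rewrite !inE -val_eqE /= ltn_neqAle.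
  by rewrite -ltnS ltn_ord andbT.
by rewrite cardsC1 card_ord.
Qed.

Lemma card_bigcup_le (I T : finType) (r : seq I) (P : pred I) (F : I -> {set T}) :
  (#|\bigcup_(i <- r | P i) F i| <= \sum_(i <- r | P i) #|F i|)%N.
Proof.
elim/big_rec2: _ => [|i A s _ h]; first by rewrite cards0.
exact: leq_trans (leq_card_setU _ _).1 (leq_add (leqnn _) h).
Qed.

(* mu is injective on mu^triangle and maps it into {0, ..., k-1}. *)
Lemma card_tri_le n k (mu : {ffun 'I_n.+1 -> 'I_k.+1}) : (#|tri mu| <= k)%N.
Proof.
have mu_inj : {in tri mu &, injective mu}.
  move=> i i' /[!inE] /existsP[j /and3P[_ /eqP hi /forallP max_i]]
    /existsP[j' /and3P[_ /eqP hi' /forallP max_i']] e.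
  apply/val_inj/eqP; rewrite eqn_leq; apply/andP; split.
    by apply: (implyP (max_i' i)); rewrite e hi'.
  by apply: (implyP (max_i i')); rewrite -e hi.
rewrite -(card_in_imset mu_inj) -[X in (_ <= X)%N]card_lower.
apply: subset_leq_card; apply/subsetP=> y /imsetP[i + ->].
by rewrite !inE => /existsP[j /and3P[hj /eqP -> _]].
Qed.

(* Part (a): the n positions of an honourable family are covered by the
   triangles of its members, and a member of alpha_k contributes at most k. *)
Lemma honourable_weight n (alpha : forall k : 'I_n.+1, {set {ffun 'I_n.+1 -> 'I_k.+1}}) :
  honourable alpha -> (n <= \sum_(k < n.+1) k * #|alpha k|)%N.
Proof.
move=> hon; have := card_bigcup_le (index_enum _) xpredT
  (fun k : 'I_n.+1 => \bigcup_(mu in alpha k) tri mu).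
rewrite hon -/(lower n) card_lower => /leq_trans; apply; apply: leq_sum => k _.
apply: leq_trans (card_bigcup_le _ _ _) _.
by rewrite mulnC -sum_nat_const; apply: leq_sum => mu _; apply: card_tri_le.
Qed.

Section RankMap.
Variable n : nat.
Variable S : {set 'I_n.+1}.

Definition rank (x : nat) : nat := #|[set s in S | (s < x)%N]|.

Lemma rank_le_card x : (rank x <= #|S|)%N.
Proof. by apply: subset_leq_card; apply/subsetP=> s; rewrite inE => /andP[]. Qed.

Lemma rank_mono x y : (x <= y)%N -> (rank x <= rank y)%N.
Proof.
move=> le_xy; apply: subset_leq_card; apply/subsetP=> s.
by rewrite !inE => /andP[-> /leq_trans]; apply.
Qed.

Lemma rank0 : rank 0 = 0.
Proof. by apply: eq_card0 => s; rewrite !inE andbF. Qed.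

Lemma rankS_le x : (rank x.+1 <= (rank x).+1)%N.
Proof.
rewrite /rank -(cardsID [set s in S | (s < x)%N] [set s in S | (s < x.+1)%N]).
have -> : [set s in S | (s < x.+1)%N] :&: [set s in S | (s < x)%N]
          = [set s in S | (s < x)%N].
  by apply/setIidPr/subsetP=> s; rewrite !inE => /andP[-> /ltnW].
rewrite -[X in (_ <= X)%N]addn1 leq_add2l; apply/card_le1_eqP=> s t.
rewrite !inE => /andP[+ /andP[sS +]] /andP[+ /andP[tS +]]; rewrite sS tS /= -!leqNgt !ltnS.
move=> le_xs le_sx le_xt le_tx.
by apply/val_inj/eqP; rewrite eqn_leq (leq_trans le_sx le_xt) (leq_trans le_tx le_xs).
Qed.

Lemma rankS_notin (i : 'I_n.+1) : i \notin S -> rank i.+1 = rank i.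
Proof.
move=> iS; apply: eq_card => s; rewrite !inE ltnS leq_eqVlt.
case sS: (s \in S) => //=; case: eqP => //= /val_inj e.
by move: sS; rewrite e (negbTE iS).
Qed.

Lemma rank_lt (s : 'I_n.+1) x : s \in S -> (s < x)%N -> (rank s < rank x)%N.
Proof.
move=> sS lt_sx; apply: proper_card; apply/properP; split.
  by apply/subsetP=> t; rewrite !inE => /andP[-> /ltn_trans]; apply.
by exists s; rewrite !inE ?sS ?lt_sx ?ltnn.
Qed.

Lemma rank_onto m y : (y <= rank m)%N -> exists2 x, (x <= m)%N & rank x = y.
Proof.
elim: m y => [|m IH] y le_y.
  by exists 0 => //; move: le_y; rewrite rank0 leqn0 => /eqP ->.
have [le_y_m | lt_m_y] := leqP y (rank m).
  by have [x le_xm <-] := IH y le_y_m; exists x => //; apply: leqW.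
exists m.+1 => //; apply/eqP; rewrite eqn_leq le_y andbT.
exact: leq_trans (rankS_le m) lt_m_y.
Qed.

Hypothesis S_lower : S \subset lower n.

Lemma rank_top x : (n <= x)%N -> rank x = #|S|.
Proof.
move=> le_nx; apply: eq_card => s; rewrite !inE.
case sS: (s \in S) => //=; move/subsetP: S_lower => /(_ s sS); rewrite inE.
by move/leq_trans; apply.
Qed.

Variable k : nat.
Hypothesis card_S : #|S| = k.

Lemma rank_lt_k x : (rank x < k.+1)%N.
Proof. by rewrite ltnS -card_S rank_le_card. Qed.

Definition rank_map : {ffun 'I_n.+1 -> 'I_k.+1} := [ffun i : 'I_n.+1 => inord (rank i)].

Lemma rank_mapE i : (rank_map i : nat) = rank i.
Proof. by rewrite ffunE inordK // rank_lt_k. Qed.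

(* rank_map is order preserving (rank is monotone) and onto [k]
   (rank takes every value between rank 0 = 0 and rank n = k). *)
Lemma rank_map_Sur : rank_map \in Sur n k.
Proof.
rewrite inE; apply/andP; split.
  by apply/forallP=> i; apply/forallP=> j; apply/implyP=> le_ij; rewrite !rank_mapE rank_mono.
apply/forallP=> y; apply/existsP.
have : (y <= rank n)%N by rewrite rank_top // card_S -ltnS ltn_ord.
case/rank_onto=> x le_xn rank_x; exists (inord x).
by rewrite -val_eqE /= rank_mapE inordK ?ltnS // rank_x.
Qed.

(* The last point of each fibre over j < k is an element of S, and conversely
   every s in S is the last point of the fibre over rank s. *)
Lemma tri_rank_map : tri rank_map = S.
Proof.
apply/setP=> i; rewrite inE; apply/existsP/idP.
  case=> j /and3P[lt_jk /eqP map_i /forallP max_i]; apply/negPn/negP => iS.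
  have [lt_in | le_ni] := ltnP i n.
    have := implyP (max_i (inord i.+1)).
    rewrite -map_i -val_eqE /= !rank_mapE inordK // rankS_notin // eqxx => /(_ isT).
    by rewrite leqNgt ltnSn.
  by move: lt_jk; rewrite -map_i rank_mapE rank_top // card_S ltnn.
move=> iS; have lt_rank_k : (rank i < k)%N.
  rewrite -card_S -(rank_top (leqnn n)); apply: rank_lt => //.
  by move/subsetP: S_lower => /(_ i iS); rewrite inE.
exists (inord (rank i)); apply/and3P; split.
- by rewrite inordK ?rank_lt_k.
- by rewrite -val_eqE /= rank_mapE inordK ?rank_lt_k.
- apply/forallP=> i'; apply/implyP; rewrite -val_eqE /= rank_mapE inordK ?rank_lt_k //.
  move/eqP=> e; rewrite leqNgt; apply/negP=> lt_ii'.
  by have := rank_lt iS lt_ii'; rewrite e ltnn.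
Qed.

End RankMap.

Section Covering.
Variable T : finType.

Definition draws (W : {set T}) (k : nat) : {set {set T}} :=
  [set S : {set T} | S \subset W & #|S| == k].

Lemma card_setD_nested (R S : {set T}) :
  (S \subset R) || (R \subset S) -> #|R :\: S| = #|R| - #|S|.
Proof.
case/orP=> [/cardsDS //|RS].
have /eqP -> : R :\: S == set0 by rewrite setD_eq0.
by rewrite cards0; apply/esym/eqP; rewrite subn_eq0 subset_leq_card.
Qed.

(* A k-subset of W nested with a given R within W: a subset of R if k <= |R|,
   otherwise R completed by k - |R| further elements of W. *)
Lemma nested_draw (W R : {set T}) k : R \subset W -> (k <= #|W|)%N ->
  exists2 S, S \in draws W k & (S \subset R) || (R \subset S).
Proof.
move=> RW le_kW; have [le_kR | lt_Rk] := leqP k #|R|.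
  have : (0 < #|draws R k|)%N by rewrite cards_draws bin_gt0.
  case/card_gt0P=> S; rewrite inE => /andP[SR card_S].
  by exists S; rewrite ?SR // inE (subset_trans SR RW).
have : (0 < #|draws (W :\: R) (k - #|R|)|)%N.
  by rewrite cards_draws bin_gt0 cardsDS // leq_sub2r.
case/card_gt0P=> S'; rewrite inE => /andP[S'_WR /eqP card_S'].
have disj_RS' : [disjoint R & S'].
  rewrite disjoint_sym disjoint_subset (subset_trans S'_WR) //.
  by apply/subsetP=> x; rewrite !inE => /andP[].
exists (R :|: S'); last by rewrite subsetUl orbT.
rewrite inE subUset RW (subset_trans S'_WR (subsetDl _ _)) /=.
by rewrite (cardsU R S') (disjoint_setI0 disj_RS') cards0 subn0 card_S' subnKC // ltnW.
Qed.

Lemma fresh_draw (W R : {set T}) (F : {set {set T}}) k :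
  R \subset W -> F \subset draws W k -> (#|F| < 'C(#|W|, k))%N ->
  {in F, forall S : {set T}, [disjoint R & S]} ->
  exists2 S, S \in draws W k :\: F & (#|R :\: S| <= #|R| - k)%N.
Proof.
move=> RW FD lt_F_C disjF.
have [R0_or_k0 | /norP[/set0Pn[x xR] k_gt0]] := boolP ((R == set0) || (k == 0)).
  have : (0 < #|draws W k :\: F|)%N by rewrite cardsDS // cards_draws subn_gt0.
  case/card_gt0P=> S SDF; exists S => //.
  case/orP: R0_or_k0 => [/eqP -> | /eqP ->]; first by rewrite set0D cards0.
  by rewrite subn0 subset_leq_card // subsetDl.
have [S SD nested] : exists2 S, S \in draws W k & (S \subset R) || (R \subset S).
  by apply: nested_draw; rewrite // -bin_gt0 (leq_trans _ lt_F_C).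
move: (SD); rewrite inE => /andP[_ /eqP card_S].
exists S; last by rewrite card_setD_nested ?card_S.
rewrite inE SD andbT; apply/negP=> SF.
have [y yR yS] : exists2 y, y \in R & y \in S.
  case/orP: nested => [SR | /subsetP RS]; last by exists x; rewrite ?RS.
  have : (0 < #|S|)%N by rewrite card_S lt0n.
  by case/card_gt0P=> y yS; exists y; rewrite ?(subsetP SR).
by rewrite (disjointFr (disjF S SF) yR) in yS.
Qed.

Lemma greedy_draws (W U : {set T}) k a : U \subset W -> (a <= 'C(#|W|, k))%N ->
  exists F : {set {set T}},
    [/\ F \subset draws W k, #|F| = a & (#|U :\: cover F| <= #|U| - k * a)%N].
Proof.
move=> UW; elim: a => [|a IH] le_a_C.
  exists set0; rewrite sub0set cards0 muln0 subn0 /cover big_set0 setD0.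
  by split.
have [F [FD card_F uncovered]] := IH (ltnW le_a_C).
have RW : U :\: cover F \subset W by apply: subset_trans (subsetDl _ _) UW.
have disjF : {in F, forall S : {set T}, [disjoint U :\: cover F & S]}.
  move=> S SF; rewrite disjoint_sym disjoint_subset; apply/subsetP=> x xS.
  by rewrite !inE negb_and negbK; apply/orP; left; apply/bigcupP; exists S.
have lt_F_C : (#|F| < 'C(#|W|, k))%N by rewrite card_F.
have [S /setDP[SD SF] covers_k] := fresh_draw RW FD lt_F_C disjF.
exists (S |: F); split.
- by rewrite subUset sub1set SD FD.
- by rewrite cardsU1 SF card_F.
- rewrite /cover big_setU1 //= setUC -setDDl (leq_trans covers_k) //.
  by rewrite mulnS addnC subnDA leq_sub2r.
Qed.

Lemma draws_family (W : {set T}) (a : nat -> nat) m :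
  (forall k, (k < m)%N -> (a k <= 'C(#|W|, k))%N) ->
  exists G : nat -> {set {set T}},
    (forall k, (k < m)%N -> G k \subset draws W k /\ #|G k| = a k) /\
    (#|W :\: \bigcup_(k < m) cover (G k)| <= #|W| - \sum_(k < m) k * a k)%N.
Proof.
elim: m => [|m IH] le_a_C.
  by exists (fun=> set0); split=> //; rewrite !big_ord0 setD0 subn0.
have [k lt_km | G [hG uncovered]] := IH; first exact/le_a_C/leqW.
have [F [FD card_F uncovered_F]] :=
  greedy_draws (subsetDl W (\bigcup_(k < m) cover (G k))) (le_a_C m (ltnSn m)).
exists (fun k => if k == m then F else G k); split.
  move=> k; rewrite ltnS leq_eqVlt => /orP[/eqP -> | lt_km]; first by rewrite eqxx.
  by rewrite (ltn_eqF lt_km); apply: hG.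
rewrite !big_ord_recr /= eqxx.
rewrite (eq_bigr (fun k : 'I_m => cover (G k))); last first.
  by move=> k _; rewrite (ltn_eqF (ltn_ord k)).
by rewrite -setDDl subnDA (leq_trans uncovered_F) // leq_sub2r.
Qed.
End Covering.

Section FamilyOfSubsets.
Variable n : nat.
Variable G : forall k : 'I_n.+1, {set {set 'I_n.+1}}.
Hypothesis G_draws : forall k : 'I_n.+1, G k \subset draws (lower n) k.

Lemma G_mem (k : 'I_n.+1) S : S \in G k -> S \subset lower n /\ #|S| = k.
Proof. by move/(subsetP (G_draws k)); rewrite inE => /andP[-> /eqP]. Qed.

Definition rank_family (k : 'I_n.+1) : {set {ffun 'I_n.+1 -> 'I_k.+1}} :=
  [set rank_map S k | S in G k].

(* A k-subset is recovered from its rank map as the triangle. *)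
Lemma rank_map_inj (k : 'I_n.+1) : {in G k &, injective (fun S => rank_map S k)}.
Proof.
move=> S1 S2 /G_mem[low1 card1] /G_mem[low2 card2] /= e.
by rewrite -(tri_rank_map low1 card1) e (tri_rank_map low2 card2).
Qed.

Lemma rank_family_in_coprod : in_coprod rank_family.
Proof.
move=> k; apply/subsetP=> mu /imsetP[S /G_mem[S_low card_S] ->].
exact: rank_map_Sur.
Qed.

Lemma card_rank_family (k : 'I_n.+1) : #|rank_family k| = #|G k|.
Proof. exact/card_in_imset/rank_map_inj. Qed.

(* The triangles of rank_family k are exactly the members of G k, so the
   family is honourable as soon as the G k cover the positions of [n]. *)
Lemma rank_family_honourable :
  lower n \subset \bigcup_(k < n.+1) cover (G k) -> honourable rank_family.
Proof.
move=> covered; rewrite /honourable -/(lower n).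
rewrite (eq_bigr (fun k : 'I_n.+1 => cover (G k))); last first.
  move=> k _; rewrite big_imset /=; last exact: rank_map_inj.
  by apply: eq_bigr => S /G_mem[S_low card_S]; apply: tri_rank_map.
apply/eqP; rewrite eqEsubset covered andbT; apply/bigcupsP=> k _.
by apply/bigcupsP=> S /G_mem[].
Qed.
End FamilyOfSubsets.

Unset Implicit Arguments.
Theorem mainTheorem11 (n : nat) (hn : (1 <= n)%N) :
  (forall alpha : forall k : 'I_n.+1, {set {ffun 'I_n.+1 -> 'I_k.+1}},
     in_coprod alpha -> honourable alpha ->
     (n <= \sum_(k < n.+1) k * #|alpha k|)%N)
  /\
  (forall a : 'I_n.+1 -> nat,
     (forall k : 'I_n.+1, (a k <= 'C(n, k))%N) ->
     (n <= \sum_(k < n.+1) k * a k)%N ->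
     exists alpha : forall k : 'I_n.+1, {set {ffun 'I_n.+1 -> 'I_k.+1}},
       [/\ in_coprod alpha, honourable alpha & forall k : 'I_n.+1, #|alpha k| = a k]).
Proof.
split=> [alpha _ |a le_a_C weight]; first exact: honourable_weight.
pose a' k := if (k < n.+1)%N then a (inord k) else 0.
have a'E (k : 'I_n.+1) : a' k = a k by rewrite /a' ltn_ord inord_val.
have le_a'_C k : (k < n.+1)%N -> (a' k <= 'C(#|lower n|, k))%N.
  by move=> lt_kn; rewrite card_lower /a' lt_kn -{2}(inordK lt_kn).
have [G [G_draws uncovered]] := draws_family le_a'_C.
have covered : lower n \subset \bigcup_(k < n.+1) cover (G k).
  rewrite -setD_eq0 -cards_eq0 -leqn0 (leq_trans uncovered) // card_lower.
  rewrite (eq_bigr (fun k : 'I_n.+1 => k * a k)) => [|k _]; last by rewrite a'E.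
  by rewrite leqn0 subn_eq0.
have G_draws' (k : 'I_n.+1) : G k \subset draws (lower n) k.
  by case: (G_draws k (ltn_ord k)).
exists (rank_family (fun k : 'I_n.+1 => G k)); split.
- exact: rank_family_in_coprod.
- exact: rank_family_honourable.
- by move=> k; rewrite (card_rank_family G_draws') -a'E; case: (G_draws k (ltn_ord k)).
Qed.
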